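(* Let $n\ge1$, $\mathcal{X}$ the simplex in $\mathbb{R}^{n+1}$, $\theta$ a kernel, $\Phi$ a Lipschitz continuous smooth function on an open neighborhood of $\mathcal{X}$, and $\eta\ge0$. Let $x(t)$ be an interior solution of the inertial dynamics (ID) that is defined for all $t\ge0$, and let $x^*\in\mathcal{X}$. Assume that for every $\delta>0$ and every $T>0$ there exists an interval $J$ of length at least $T$ such that $\max_\alpha|x_\alpha(t)-x^*_\alpha|<\delta$ for all $t\in J$. Then $$\frac{\partial\Phi}{\partial x_\alpha}(x^* )=\frac{\partial\Phi}{\partial x_\beta}(x^* )\quad\text{for all }\alpha,\beta\in\mathrm{supp}(x^* ).$$
   Context: $\mathcal{X}=\{x\in\mathbb{R}^{n+1}:x_\alpha\ge0,\sum_\alpha x_\alpha=1\}$ with relative interior $\mathcal{X}^\circ$; $\mathrm{supp}(x)=\{\alpha:x_\alpha>0\}$. A kernel is a $C^\infty$ function $\theta:[0,\infty)\to\mathbb{R}\cup\{+\infty\}$ with $\theta(x)<\infty$ for $x>0$, $\lim_{x\to0^+}\theta'(x)=-\infty$, $\theta''>0$, $\theta'''<0$ on $(0,\infty)$. With $\theta''_\alpha=\theta''(x_\alpha)$, $\theta'''_\alpha=\theta'''(x_\alpha)$, $\Theta''=(\sum_\beta1/\theta''_\beta)^{-1}$, $v_\alpha=\partial\Phi/\partial x_\alpha$, the inertial dynamics (ID) on $\mathcal{X}^\circ$ are $$\ddot x_\alpha=\frac{1}{\theta''_\alpha}\Big[v_\alpha-\sum_{\beta}\frac{\Theta''}{\theta''_\beta}v_\beta\Big]-\frac{1}{2\theta''_\alpha}\Big[\theta'''_\alpha\dot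 x_\alpha^2-\sum_\beta\frac{\Theta''}{\theta''_\beta}\theta'''_\beta\dot x_\beta^2\Big]-\eta\dot x_\alpha.$$ *)

From HB Require Import structures.
From mathcomp Require Import all_boot all_order all_algebra.
From mathcomp Require Import all_classical all_reals all_analysis.
Set Implicit Arguments. Unset Strict Implicit. Unset Printing Implicit Defensive.
Import Order.TTheory GRing.Theory Num.Theory.
Import numFieldNormedType.Exports.
Local Open Scope classical_set_scope.
Local Open Scope ring_scope.

Section Defs.
Variable R : realType.

Definition simplex (n : nat) (y : 'rV[R]_n.+1) : Prop :=
  (forall a, 0 <= y ord0 a) /\ \sum_a y ord0 a = 1.

Definition simplex_interior (n : nat) (y : 'rV[R]_n.+1) : Prop :=
  (forall a, 0 < y ord0 a) /\ \sum_a y ord0 a = 1.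

Definition supp_pt (n : nat) (y : 'rV[R]_n.+1) : set 'I_n.+1 := [set a | 0 < y ord0 a].

Definition evec (n : nat) (a : 'I_n.+1) : 'rV[R]_n.+1 := delta_mx ord0 a.

Definition pderiv (n : nat) (F : 'rV[R]_n.+1 -> R) (a : 'I_n.+1) (y : 'rV[R]_n.+1) : R :=
  'D_(evec a) F y.

Fixpoint Ck_on (n : nat) (k : nat) (U : set 'rV[R]_n.+1) (F : 'rV[R]_n.+1 -> R) : Prop :=
  match k with
  | 0%N => forall y, U y -> {for y, continuous F}
  | k'.+1 => (forall y, U y -> {for y, continuous F}) /\
             forall a, (forall y, U y -> derivable F y (evec a)) /\
                       Ck_on k' U (pderiv F a)
  end.

Definition Cinf_on (n : nat) (U : set 'rV[R]_n.+1) (F : 'rV[R]_n.+1 -> R) : Prop :=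
  forall k, Ck_on k U F.

Definition Lipschitz_on (n : nat) (U : set 'rV[R]_n.+1) (F : 'rV[R]_n.+1 -> R) : Prop :=
  exists L : R, forall y z, U y -> U z -> `|F y - F z| <= L * `|y - z|.

Definition is_kernel (theta : R -> R) : Prop :=
  (forall (k : nat) (x : R), 0 < x -> derivable (derive1n k theta) x 1) /\
  (derive1 theta x @[x --> 0^'+] --> -oo) /\
  (forall x : R, 0 < x -> 0 < derive1n 2 theta x) /\
  (forall x : R, 0 < x -> derive1n 3 theta x < 0).

Definition ID_rhs (n : nat) (theta : R -> R) (Phi : 'rV[R]_n.+1 -> R) (eta : R)
  (y : 'rV[R]_n.+1) (yd : 'I_n.+1 -> R) (a : 'I_n.+1) : R :=
  let th2 b := derive1n 2 theta (y ord0 b) in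
  let th3 b := derive1n 3 theta (y ord0 b) in
  let Th2 := (\sum_b (th2 b)^-1)^-1 in
  let v b := pderiv Phi b y in
  (th2 a)^-1 * (v a - \sum_b Th2 / th2 b * v b)
  - (2 * th2 a)^-1 * (th3 a * yd a ^+ 2 - \sum_b Th2 / th2 b * th3 b * yd b ^+ 2)
  - eta * yd a.

Definition ID_solution (n : nat) (theta : R -> R) (Phi : 'rV[R]_n.+1 -> R) (eta : R)
  (x : R -> 'rV[R]_n.+1) : Prop :=
  (forall t, 0 <= t -> simplex_interior (x t)) /\
  (forall a t, 0 <= t -> {for t, continuous (fun s => x s ord0 a)}) /\
  (forall a t, 0 < t ->
     derivable (fun s => x s ord0 a) t 1 /\
     derivable (derive1 (fun u => x u ord0 a)) t 1) /\
  (forall a t, 0 < t ->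
     derive1n 2 (fun u => x u ord0 a) t =
     ID_rhs theta Phi eta (x t) (fun b => derive1 (fun u => x u ord0 b) t) a).

End Defs.

From HB Require Import structures.
From mathcomp Require Import all_boot all_order all_algebra.
From mathcomp Require Import all_classical all_reals all_analysis.
From mathcomp Require Import ring lra.
Set Implicit Arguments. Unset Strict Implicit. Unset Printing Implicit Defensive.
Import Order.TTheory GRing.Theory Num.Theory.
Import numFieldNormedType.Exports.
Local Open Scope classical_set_scope.
Local Open Scope ring_scope.

(* Suppose [v be < v al] at [xs] for two coordinates [al], [be] of its support,
   where [v] is the gradient of [Phi].  With the multiplier [lam] of (ID), the
   equation reads [theta''(x g) (x g'' + eta x g') = v g - lam - theta'''(x g) (x g')^2 / 2].
   For [Y = theta''(xs al) x al - (1 + eps) theta'(x be)] and small [eps], the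
   curvature terms enter [Y'' + eta Y'] with a favourable sign ([theta''' < 0]),
   and [lam] cancels up to an error controlled by [lam >= - max |v|]; hence
   [Y'' + eta Y' >= e > 0] while [x] is close to [xs].  As [Y] is bounded there,
   [x] stays close to [xs] only for a bounded time. *)

Section damped_growth.
Variable R : realType.
Implicit Types (f df Y dY ddY : R -> R) (a b s t m e M eta : R).

Lemma increment_ge_of_derive_ge f df a b s t m :
  a < s -> s < t -> t < b ->
  (forall y, a < y < b -> is_derive y 1 f (df y)) ->
  (forall y, s < y < t -> m <= df y) -> m * (t - s) <= f t - f s.
Proof.
move=> lt_as lt_st lt_tb f_der m_le.
have inside y : s <= y <= t -> a < y < b.
  by case/andP=> sy yt; rewrite (lt_le_trans lt_as sy) (le_lt_trans yt lt_tb).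
have f_cont : {within `[s, t], continuous f}.
  apply: derivable_within_continuous => y /[!in_itv] /= yst.
  exact/ex_derive/f_der/inside.
have f_der' y : y \in `]s, t[ -> is_derive y 1 f (df y).
  by rewrite in_itv /= => /andP[sy yt]; apply: f_der; rewrite inside // !ltW.
have [y /[!in_itv] /= /andP[sy yt] ->] := MVT lt_st f_der' f_cont.
by apply: ler_wpM2r; [rewrite subr_ge0 ltW | apply: m_le; rewrite sy yt].
Qed.

Lemma derive_ge1_interval_le Y dY a b s t M :
  a < s -> s < t -> t < b ->
  (forall y, a < y < b -> is_derive y 1 Y (dY y)) ->
  (forall y, a < y < b -> `|Y y| <= M) ->
  (forall y, s < y < t -> 1 <= dY y) -> t - s <= 2 * M.
Proof.
move=> lt_as lt_st lt_tb Y_der Y_bd dY_ge.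
have := increment_ge_of_derive_ge lt_as lt_st lt_tb Y_der dY_ge.
have /Y_bd : a < s < b by rewrite lt_as (lt_trans lt_st lt_tb).
have /Y_bd : a < t < b by rewrite lt_tb (lt_trans lt_as lt_st).
rewrite !ler_norml => /andP[? ?] /andP[? ?]; lra.
Qed.

Lemma derive_leN1_interval_le Y dY a b s t M :
  a < s -> s < t -> t < b ->
  (forall y, a < y < b -> is_derive y 1 Y (dY y)) ->
  (forall y, a < y < b -> `|Y y| <= M) ->
  (forall y, s < y < t -> dY y <= -1) -> t - s <= 2 * M.
Proof.
move=> lt_as lt_st lt_tb Y_der Y_bd dY_le.
apply: (@derive_ge1_interval_le (- Y) (- dY) a b) => // y yab.
- exact: is_deriveN (Y_der y yab).
- by rewrite normrN Y_bd.
- by rewrite lerNr dY_le.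
Qed.

(* With [W := Y' + eta Y] we have [W' >= e]; after a time [(eta M + 1) / e] on
   one side of any point [m], [|W| >= eta M + 1] forces [|Y'| >= 1], which a
   function bounded by [M] can only sustain for a time [2 M]. *)
Lemma damped_accel_interval_le Y dY ddY a b eta e M :
  a < b -> 0 < e -> 0 <= eta ->
  (forall t, a < t < b -> `|Y t| <= M) ->
  (forall t, a < t < b -> is_derive t 1 Y (dY t)) ->
  (forall t, a < t < b -> is_derive t 1 dY (ddY t)) ->
  (forall t, a < t < b -> e <= ddY t + eta * dY t) ->
  b - a <= 2 * ((eta * M + 1) / e + 2 * M + 1).
Proof.
move=> lt_ab e_gt0 eta_ge0 Y_bd Y_der dY_der accel_ge.
set W := fun t => dY t + eta * Y t.
have W_der t : a < t < b -> is_derive t 1 W (ddY t + eta * dY t).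
  by move=> tab; apply: is_deriveD (is_deriveZ _ (Y_der t tab)); exact: dY_der.
have W_incr s t : a < s -> s < t -> t < b -> e * (t - s) <= W t - W s.
  move=> lt_as lt_st lt_tb; apply: (increment_ge_of_derive_ge lt_as lt_st lt_tb W_der).
  by move=> y /andP[sy yt]; apply: accel_ge; apply/andP; split; lra.
set m := (a + b) / 2; set L := (eta * M + 1) / e.
have mab : a < m < b by apply/andP; split; rewrite /m; lra.
have M_ge0 : 0 <= M := le_trans (normr_ge0 _) (Y_bd m mab).
have L_ge0 : 0 <= L by rewrite /L divr_ge0 ?ltW //; nra.
have eL : e * L = eta * M + 1 by rewrite /L mulrC divfK ?gt_eqF.
have etaY_bd t : a < t < b -> `|eta * Y t| <= eta * M.
  by move=> tab; rewrite normrM ger0_norm // ler_wpM2l // Y_bd.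
rewrite leNgt; apply/negP => long.
have far : L + 2 * M + 1 < m - a /\ L + 2 * M + 1 < b - m by rewrite /m; lra.
have [Wm_ge0 | Wm_lt0] := lerP 0 (W m).
- suff : (m + L + (2 * M + 1)) - (m + L) <= 2 * M by lra.
  apply: (derive_ge1_interval_le (a := a) (b := b) _ _ _ Y_der Y_bd); try lra.
  move=> y /andP[y1 y2]; have yab : a < y < b by apply/andP; split; lra.
  have := W_incr m y (proj1 (andP mab)) ltac:(lra) ltac:(lra).
  have := etaY_bd y yab; rewrite ler_norml => /andP[_ ?].
  have : e * L <= e * (y - m) by rewrite ler_wpM2l ?ltW //; lra.
  rewrite /W /= in Wm_ge0 *; lra.
- suff : (m - L) - (m - L - (2 * M + 1)) <= 2 * M by lra.
  apply: (derive_leN1_interval_le (a := a) (b := b) _ _ _ Y_der Y_bd); try lra.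
  move=> y /andP[y1 y2]; have yab : a < y < b by apply/andP; split; lra.
  have := W_incr y m ltac:(lra) ltac:(lra) (proj2 (andP mab)).
  have := etaY_bd y yab; rewrite ler_norml => /andP[? _].
  have : e * L <= e * (m - y) by rewrite ler_wpM2l ?ltW //; lra.
  rewrite /W /= in Wm_lt0 *; lra.
Qed.
End damped_growth.

Lemma kernel_is_derive (R : realType) (theta : R -> R) (m : nat) (y : R) :
  is_kernel theta -> 0 < y -> is_derive y 1 (derive1n m theta) (derive1n m.+1 theta y).
Proof. by move=> [th_der _] y_gt0; rewrite derive1nS derive1E; exact/derivableP/th_der. Qed.

Lemma kernel_continuous (R : realType) (theta : R -> R) (m : nat) (y : R) :
  is_kernel theta -> 0 < y -> {for y, continuous (derive1n m theta)}.
Proof.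
by move=> [th_der _] y_gt0; apply/differentiable_continuous/derivable1_diffP/th_der.
Qed.

Section ID_multiplier.
Variables (R : realType) (n : nat) (theta : R -> R) (Phi : 'rV[R]_n.+1 -> R).

Definition ID_multiplier (y : 'rV[R]_n.+1) (yd : 'I_n.+1 -> R) : R :=
  let th2 b := derive1n 2 theta (y ord0 b) in
  let th3 b := derive1n 3 theta (y ord0 b) in
  let Th2 := (\sum_b (th2 b)^-1)^-1 in
  \sum_b Th2 / th2 b * pderiv Phi b y - (\sum_b Th2 / th2 b * th3 b * yd b ^+ 2) / 2.

Lemma ID_rhs_damped eta (y : 'rV[R]_n.+1) (yd : 'I_n.+1 -> R) a :
  derive1n 2 theta (y ord0 a) != 0 ->
  ID_rhs theta Phi eta y yd a + eta * yd a
  = (pderiv Phi a y - ID_multiplier y yd - derive1n 3 theta (y ord0 a) * yd a ^+ 2 / 2)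
    / derive1n 2 theta (y ord0 a).
Proof.
(* [field] is very slow unless the non-polynomial atoms are generalized first. *)
rewrite /ID_rhs /ID_multiplier; cbv zeta.
move: (\sum_b _ * pderiv Phi b y) (\sum_b _ * yd b ^+ 2) => S K.
move: (derive1n 2 theta (y ord0 a)) (derive1n 3 theta (y ord0 a)) => th2 th3 th2_neq0.
by field.
Qed.

Lemma ID_multiplier_ge (y : 'rV[R]_n.+1) (yd : 'I_n.+1 -> R) V :
  (forall b, 0 < derive1n 2 theta (y ord0 b)) ->
  (forall b, derive1n 3 theta (y ord0 b) <= 0) ->
  (forall b, - V <= pderiv Phi b y) -> - V <= ID_multiplier y yd.
Proof.
move=> th2_gt0 th3_le0 v_ge.
rewrite /ID_multiplier /=; set Th2 := (\sum_b _)^-1.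
have sum_gt0 : 0 < \sum_b (derive1n 2 theta (y ord0 b))^-1.
  rewrite (bigD1 ord0) //=; apply: ltr_pwDl; first by rewrite invr_gt0 th2_gt0.
  by apply: sumr_ge0 => b _; rewrite invr_ge0 ltW ?th2_gt0.
have Th2_gt0 : 0 < Th2 by rewrite invr_gt0.
have w_ge0 b : 0 <= Th2 / derive1n 2 theta (y ord0 b) by rewrite divr_ge0 ?ltW ?th2_gt0.
have mean_ge : - V <= \sum_b Th2 / derive1n 2 theta (y ord0 b) * pderiv Phi b y.
  have -> : - V = \sum_b Th2 / derive1n 2 theta (y ord0 b) * - V.
    by rewrite -mulr_suml -mulr_sumr mulVf ?gt_eqF // mul1r.
  by apply: ler_sum => b _; apply: ler_wpM2l.
have : \sum_b Th2 / derive1n 2 theta (y ord0 b) * derive1n 3 theta (y ord0 b) * yd b ^+ 2 <= 0.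
  by apply: sumr_le0 => b _; rewrite mulr_le0_ge0 ?sqr_ge0 ?mulr_ge0_le0.
lra.
Qed.

End ID_multiplier.

(* Used with [r] the ratio [theta''(xs al) / theta''(x al)], [l] the multiplier and
   [q], [w] the curvature terms, which (ID) gives the favourable signs. *)
Lemma comparison_ineq (R : realFieldType) (r eps V l va vb q w e : R) :
  0 <= eps <= 1 -> `|r - 1| <= eps -> - V <= l -> `|va| <= V -> `|vb| <= V ->
  0 <= q -> w <= 0 -> 2 * e <= va - vb -> 4 * eps * V <= e ->
  e <= r * (va - l + q) - (1 + eps) * (vb - l + w).
Proof.
move=> /andP[eps_ge0 eps_le1] r_near1 l_ge va_bd vb_bd q_ge0 w_le0 gap epsV.
have l_bd : `|l| <= l + 2 * V.
  have := normr_ge0 va; case: (lerP 0 l) => [/ger0_norm|/ltr0_norm] ->; lra.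
have p_bd : `|va - l| <= 3 * V + l.
  by apply: le_trans (ler_normB _ _) _; lra.
have : - (eps * (3 * V + l + q)) <= (r - 1) * (va - l + q).
  rewrite lerNl; apply: le_trans (ler_norm _) _; rewrite normrN normrM.
  apply: ler_pM => //; apply: le_trans (ler_normD _ _) _.
  by rewrite (ger0_norm q_ge0); lra.
have : eps * vb <= eps * V by rewrite ler_wpM2l //; move: vb_bd; rewrite ler_norml => /andP[].
have : eps * q <= q by rewrite -[leRHS]mul1r ler_wpM2r.
have : eps * w <= 0 by rewrite mulr_ge0_le0.
nra.
Qed.

Lemma damped_difference_eq (R : numFieldType) (k c h l A B a3 b3 da db dda ddb va vb : R) :
  A != 0 -> B != 0 ->
  dda + h * da = (va - l - a3 * da ^+ 2 / 2) / A ->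
  ddb + h * db = (vb - l - b3 * db ^+ 2 / 2) / B ->
  k * dda - c * (B * ddb + db * (b3 * db)) + h * (k * da - c * (B * db))
  = k / A * (va - l + - (a3 * da ^+ 2 / 2)) - c * (vb - l + b3 * db ^+ 2 / 2).
Proof.
move=> A_neq0 B_neq0 dda_eq ddb_eq.
have -> : dda = (va - l - a3 * da ^+ 2 / 2) / A - h * da by rewrite -dda_eq addrK.
have -> : ddb = (vb - l - b3 * db ^+ 2 / 2) / B - h * db by rewrite -ddb_eq addrK.
by field; rewrite A_neq0 B_neq0.
Qed.

Lemma ratio_near1 (R : realFieldType) (k A eps : R) :
  0 < k -> 0 <= eps <= 1 -> `|A - k| < eps * k / 2 -> `|k / A - 1| <= eps.
Proof.
move=> k_gt0 /andP[eps_ge0 eps_le1]; rewrite ltr_norml => /andP[Ak_ge Ak_le].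
have A_gt0 : 0 < A by nra.
have -> : k / A - 1 = (k - A) / A by rewrite mulrBl divff ?gt_eqF.
rewrite normrM normfV (gtr0_norm A_gt0).
rewrite ler_pdivrMr // ler_norml; apply/andP; split; nra.
Qed.

Lemma nbhs_rV_coord (R : realType) n (y0 : 'rV[R]_n.+1) (P : 'rV[R]_n.+1 -> Prop) :
  (\forall y \near y0, P y) ->
  exists2 d : R, 0 < d &
    forall y : 'rV[R]_n.+1, (forall i, `|y ord0 i - y0 ord0 i| < d) -> P y.
Proof.
move=> /nbhs_ballP[d d_gt0 dP]; exists d => // y yd; apply: dP; split => // i j.
by rewrite (ord1 i) -ball_normE /ball_ /= distrC.
Qed.

Section support_gap.
Variables (R : realType) (n : nat) (theta : R -> R) (Phi : 'rV[R]_n.+1 -> R).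
Variables (eta : R) (x : R -> 'rV[R]_n.+1) (xs : 'rV[R]_n.+1) (al be : 'I_n.+1).
Implicit Types (t : R) (g : 'I_n.+1) (y : 'rV[R]_n.+1).
Hypothesis theta_kernel : is_kernel theta.
Hypothesis eta_ge0 : 0 <= eta.
Hypothesis x_sol : ID_solution theta Phi eta x.
Hypothesis pderiv_cont : forall b, {for xs, continuous (pderiv Phi b)}.
Hypotheses (al_supp : supp_pt xs al) (be_supp : supp_pt xs be).
Hypothesis pderiv_gap : pderiv Phi be xs < pderiv Phi al xs.

Let v b := pderiv Phi b xs.
Let e := (v al - v be) / 4.
Let V := \sum_b `|v b| + 4 * e.
Let eps := e / (4 * V).
Let k := derive1n 2 theta (xs ord0 al).

Let e_gt0 : 0 < e. Proof. by rewrite /e divr_gt0 // subr_gt0. Qed.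

Let v_le_V b : `|v b| + e <= V.
Proof.
rewrite /V (bigD1 b) //=.
have : 0 <= \sum_(i | i != b) `|v i| by apply: sumr_ge0.
by have := e_gt0; lra.
Qed.

Let V_gt0 : 0 < V.
Proof. by have := v_le_V al; have := normr_ge0 (v al); have := e_gt0; lra. Qed.

Let eps_gt0 : 0 < eps. Proof. by rewrite /eps divr_gt0 // mulr_gt0. Qed.

Let eps_le1 : eps <= 1.
Proof.
rewrite /eps ler_pdivrMr ?mulr_gt0 //.
by have := v_le_V al; have := normr_ge0 (v al); have := e_gt0; lra.
Qed.

Let eps_V : 4 * eps * V = e.
Proof. by rewrite /eps; field; rewrite gt_eqF. Qed.

Let k_gt0 : 0 < k.
Proof. by case: theta_kernel => _ [_ [th2_gt0 _]]; exact: th2_gt0. Qed.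

Let close (y : 'rV[R]_n.+1) : Prop :=
  [/\ forall b, `|pderiv Phi b y - v b| < e,
      `|y ord0 al - xs ord0 al| < 1,
      `|derive1n 2 theta (y ord0 al) - k| < eps * k / 2 &
      `|derive1n 1 theta (y ord0 be) - derive1n 1 theta (xs ord0 be)| < 1].

Let near_close : \forall y \near xs, close y.
Proof.
have coord g : {for xs, continuous (fun y : 'rV[R]_n.+1 => y ord0 g)}.
  exact: coord_continuous.
have th_cont m g : supp_pt xs g ->
    {for xs, continuous (derive1n m theta \o fun y : 'rV[R]_n.+1 => y ord0 g)}.
  move=> g_supp; apply: continuous_comp (coord g) _.
  exact: kernel_continuous theta_kernel g_supp.
near=> y; split.
- near: y; apply: filter_forall => b.
  exact: cvgr_distC_lt _ _ (@pderiv_cont b) _ e_gt0.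
- near: y; exact: cvgr_distC_lt _ _ (coord al) _ ltr01.
- near: y; apply: cvgr_distC_lt _ _ (th_cont 2%N al al_supp) _ _.
  by apply: divr_gt0 => //; exact: mulr_gt0 eps_gt0 k_gt0.
- near: y; exact: cvgr_distC_lt _ _ (th_cont 1%N be be_supp) _ ltr01.
Unshelve. all: by end_near.
Qed.

Let X g t := x t ord0 g.
Let Y t := k * X al t - (1 + eps) * derive1n 1 theta (X be t).
Let dY t := k * derive1 (X al) t
  - (1 + eps) * (derive1n 2 theta (X be t) * derive1 (X be) t).
Let ddY t := k * derive1 (derive1 (X al)) t
  - (1 + eps) * (derive1n 2 theta (X be t) * derive1 (derive1 (X be)) t
                 + derive1 (X be) t * (derive1n 3 theta (X be t) * derive1 (X be) t)).

Let X_gt0 g t : 0 < t -> 0 < X g t.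
Proof. by case: x_sol => x_int _ t_gt0; exact: (x_int t (ltW t_gt0)).1. Qed.

Let X_is_derive g t : 0 < t -> is_derive t 1 (X g) (derive1 (X g) t).
Proof.
case: x_sol => _ [_ [x_der _]] /(x_der g)[X_der _].
by rewrite derive1E; exact: derivableP.
Qed.

Let dX_is_derive g t : 0 < t -> is_derive t 1 (derive1 (X g)) (derive1 (derive1 (X g)) t).
Proof.
case: x_sol => _ [_ [x_der _]] /(x_der g)[_ dX_der].
by rewrite [X in is_derive _ _ _ X]derive1E; exact: derivableP.
Qed.

Let Y_is_derive t : 0 < t -> is_derive t 1 Y (dY t).
Proof.
move=> t_gt0; apply: is_deriveB (is_deriveZ _ (X_is_derive al t_gt0)) _.
apply: is_deriveZ; apply: is_derive1_comp (X_is_derive be t_gt0).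
exact: kernel_is_derive theta_kernel (X_gt0 be t_gt0).
Qed.

Let dY_is_derive t : 0 < t -> is_derive t 1 dY (ddY t).
Proof.
move=> t_gt0; apply: is_deriveB (is_deriveZ _ (dX_is_derive al t_gt0)) _.
apply: is_deriveZ; apply: is_deriveM (dX_is_derive be t_gt0).
apply: is_derive1_comp (X_is_derive be t_gt0).
exact: kernel_is_derive theta_kernel (X_gt0 be t_gt0).
Qed.

Let M := k * (`|xs ord0 al| + 1) + 2 * (`|derive1n 1 theta (xs ord0 be)| + 1).

Let M_ge0 : 0 <= M.
Proof.
have := normr_ge0 (xs ord0 al); have := normr_ge0 (derive1n 1 theta (xs ord0 be)).
by rewrite /M; have := k_gt0; nra.
Qed.

Let Y_bounded t : close (x t) -> `|Y t| <= M.
Proof.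
case=> _ Xal_near _ th1_near.
have Xal_bd : `|k * X al t| <= k * (`|xs ord0 al| + 1).
  rewrite normrM (gtr0_norm k_gt0) ler_wpM2l ?ltW //.
  by have := lerB_dist (X al t) (xs ord0 al); rewrite /X; lra.
have th1_bd : `|(1 + eps) * derive1n 1 theta (X be t)|
    <= 2 * (`|derive1n 1 theta (xs ord0 be)| + 1).
  rewrite normrM ger0_norm; last by have := eps_gt0; lra.
  have := lerB_dist (derive1n 1 theta (X be t)) (derive1n 1 theta (xs ord0 be)).
  have := eps_le1; have := eps_gt0; have := normr_ge0 (derive1n 1 theta (X be t)).
  by rewrite /X; nra.
by apply: le_trans (ler_normB _ _) _; rewrite /M; lra.
Qed.

Let pderiv_close_bd y g : close y -> `|pderiv Phi g y| <= V.
Proof.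
case=> /(_ g) v_near _ _ _; have := v_le_V g.
by have := lerB_dist (pderiv Phi g y) (v g); lra.
Qed.

Let pderiv_close_gap y : close y -> 2 * e <= pderiv Phi al y - pderiv Phi be y.
Proof.
case=> v_near _ _ _; have : v al - v be = 4 * e by rewrite /e; lra.
by move: (v_near al) (v_near be); rewrite !ltr_norml => /andP[? ?] /andP[? ?]; lra.
Qed.

Let damped_accel_ge t : 0 < t -> close (x t) -> e <= ddY t + eta * dY t.
Proof.
move=> t_gt0 xt_close.
have [th2_gt0 th3_lt0] : (forall g, 0 < derive1n 2 theta (X g t))
    /\ (forall g, derive1n 3 theta (X g t) < 0).
  case: theta_kernel => _ [_ [th2 th3]].
  by split=> g; [apply: th2 | apply: th3]; exact: X_gt0.
pose yd g := derive1 (X g) t.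
set lam := ID_multiplier theta Phi (x t) yd.
have accel_eq g : derive1 (derive1 (X g)) t + eta * yd g
    = (pderiv Phi g (x t) - lam - derive1n 3 theta (X g t) * yd g ^+ 2 / 2)
      / derive1n 2 theta (X g t).
  have -> : derive1 (derive1 (X g)) t = ID_rhs theta Phi eta (x t) yd g.
    by case: x_sol => _ [_ [_ x_eq]]; exact: x_eq.
  exact: ID_rhs_damped (lt0r_neq0 (th2_gt0 g)).
rewrite /ddY /dY (damped_difference_eq k (1 + eps) (lt0r_neq0 (th2_gt0 al))
  (lt0r_neq0 (th2_gt0 be)) (accel_eq al) (accel_eq be)).
case: (xt_close) => _ _ th2_near _.
have eps_range : 0 <= eps <= 1 by rewrite ltW ?eps_gt0 ?eps_le1.
apply: (comparison_ineq (V := V)) => //.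
- exact: ratio_near1 k_gt0 eps_range th2_near.
- apply: ID_multiplier_ge => g; [exact: th2_gt0 | exact: ltW (th3_lt0 g) | ].
  by have := pderiv_close_bd g xt_close; rewrite ler_norml => /andP[-> _].
- exact: pderiv_close_bd.
- exact: pderiv_close_bd.
- by rewrite oppr_ge0 mulr_le0_ge0 ?mulr_le0_ge0 ?sqr_ge0 ?ltW ?th3_lt0.
- by rewrite mulr_le0_ge0 ?mulr_le0_ge0 ?sqr_ge0 ?ltW ?th3_lt0.
- exact: pderiv_close_gap.
- by rewrite eps_V.
Qed.

Lemma pderiv_gap_absurd :
  (forall delta T : R, 0 < delta -> 0 < T ->
     exists a b : R, 0 <= a /\ T <= b - a /\
       forall t, a < t < b -> forall g, `|x t ord0 g - xs ord0 g| < delta) -> False.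
Proof.
move=> lingers.
have [d d_gt0 d_close] := nbhs_rV_coord near_close.
pose T := 2 * ((eta * M + 1) / e + 2 * M + 1) + 1.
have T_gt0 : 0 < T.
  have : 0 <= (eta * M + 1) / e.
    by apply: divr_ge0; [exact: addr_ge0 (mulr_ge0 eta_ge0 M_ge0) ler01 | exact: ltW e_gt0].
  by rewrite /T; have := M_ge0; lra.
have [a [b [a_ge0 [T_le ab_close]]]] := lingers d T d_gt0 T_gt0.
have t_gt0 t : a < t < b -> 0 < t by case/andP=> at_ _; lra.
have xt_close t : a < t < b -> close (x t) by move=> tab; exact/d_close/ab_close.
have ab : a < b by lra.
have := damped_accel_interval_le ab e_gt0 eta_ge0
  (fun t tab => Y_bounded (xt_close t tab))
  (fun t tab => Y_is_derive (t_gt0 t tab)) (fun t tab => dY_is_derive (t_gt0 t tab))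
  (fun t tab => damped_accel_ge (t_gt0 t tab) (xt_close t tab)).
by rewrite /T in T_le; lra.
Qed.

End support_gap.

Theorem proposition4p1 (R : realType) (n : nat) (theta : R -> R)
  (Phi : 'rV[R]_n.+1 -> R) (U : set 'rV[R]_n.+1) (eta : R)
  (x : R -> 'rV[R]_n.+1) (xs : 'rV[R]_n.+1) :
  (1 <= n)%N ->
  is_kernel theta ->
  open U -> (forall y, simplex y -> U y) ->
  Cinf_on U Phi -> Lipschitz_on U Phi ->
  0 <= eta ->
  ID_solution theta Phi eta x ->
  simplex xs ->
  (forall delta T : R, 0 < delta -> 0 < T ->
     exists a b : R, 0 <= a /\ T <= b - a /\
       forall t, a < t < b -> forall al, `|x t ord0 al - xs ord0 al| < delta) ->
  forall al be, supp_pt xs al -> supp_pt xs be -> pderiv Phi al xs = pderiv Phi be xs.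
Proof.
move=> _ theta_kernel _ simplex_sub Phi_smooth _ eta_ge0 x_sol xs_simplex lingers
  al be al_supp be_supp.
have pderiv_cont b : {for xs, continuous (pderiv Phi b)}.
  by case: (Phi_smooth 1%N) => _ /(_ b)[_ cont]; exact: cont (simplex_sub _ xs_simplex).
apply/eqP; rewrite eq_le !leNgt; apply/andP; split; apply/negP => gap.
- exact: pderiv_gap_absurd theta_kernel eta_ge0 x_sol pderiv_cont al_supp be_supp gap lingers.
- exact: pderiv_gap_absurd theta_kernel eta_ge0 x_sol pderiv_cont be_supp al_supp gap lingers.
Qed.
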